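(* Consider a classical elementary system with timelike four-momentum and non-zero spin, in explicit form (ii). Let $\mathbf A\colon\Gamma\to\mathbb R^3$ be $C^1$, invariant under spatial translations ($\{P_a,A_b\}=0$), transforming as a vector under spatial rotations ($\{J_{ab},A_c\}=\delta_{ac}A_b-\delta_{bc}A_a$), and satisfying $\mathbf A\cdot\mathbf P=0$. Then on $\Gamma^*\setminus\{\mathbf s\parallel\hat{\mathbf P}\}$ one has $$\mathbf A=B\,\hat{\mathbf P}\times\mathbf s+C\,\hat{\mathbf P}\times(\hat{\mathbf P}\times\mathbf s),$$ where $B=B(|\mathbf P|,\hat{\mathbf P}\cdot\mathbf s)$ and $C=C(|\mathbf P|,\hat{\mathbf P}\cdot\mathbf s)$ for $C^1$ functions $B,C\colon\mathbb R_+\times(-S,S)\to\mathbb R$.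
   Context: Fix a positively oriented orthonormal basis $\{e_0,\dots,e_3\}$ of Minkowski space (signature $(-,+,+,+)$), speed of light $c>0$, $m>0$, $S>0$. Spatial indices raised/lowered with Kronecker delta; ${}^{(3)}\varepsilon_{abc}$ Levi-Civita symbol; $\mathbf A\cdot\mathbf B=A_aB^a$, $(\mathbf A\times\mathbf B)_a={}^{(3)}\varepsilon_{abc}A^bB^c$. Poisson bracket: $\omega(X_f,\cdot)=df$, $\{f,g\}=\omega(X_f,X_g)$. Form (ii): $\Gamma=T^*\mathbb R^3\times\mathsf S^2\ni(\mathbf x,\mathbf p,\hat{\mathbf s})$, $\omega=dx^a\wedge dp_a+S\,d\Omega^2$; $\mathbf s=S\hat{\mathbf s}$, $\{s_a,s_b\}={}^{(3)}\varepsilon_{abc}s^c$, $\mathbf s$ Poisson-commuting with $\mathbf x,\mathbf p$; $P_a=p_a$, $P_0=-\sqrt{m^2c^2+\mathbf p^2}$, $J_{ab}=x_ap_b-x_bp_a+{}^{(3)}\varepsilon_{abc}s^c$, $J_{a0}=P_0x_a-\frac{(\mathbf p\times\mathbf s)_a}{mc-P_0}$. $\Gamma^*=\Gamma\setminus\{|\mathbf P|=0\}$, $\hat{\mathbf P}=\mathbf P/|\mathbf P|$; $\{\mathbf s\parallel\hat{\mathbf P}\}$ is the set where $\mathbf s$ is parallel or antiparallel to $\hat{\mathbf P}$. *)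

From HB Require Import structures.
From mathcomp Require Import all_boot all_order all_algebra.
From mathcomp Require Import all_classical all_reals all_analysis.
Set Implicit Arguments. Unset Strict Implicit. Unset Printing Implicit Defensive.
Import Order.TTheory GRing.Theory Num.Theory.
Import numFieldNormedType.Exports.
Local Open Scope classical_set_scope.
Local Open Scope ring_scope.

Notation vec R := 'rV[R]_3.
(* ambient coordinates (x, p, s) of Gamma = T^*R^3 x S^2; the point lies in
   Gamma iff |s| = S *)
Definition PS (R : realType) := (vec R * vec R * vec R)%type.

Section Defs.
Variable R : realType.

Definition xof (z : PS R) : vec R := z.1.1.
Definition pof (z : PS R) : vec R := z.1.2.
Definition sof (z : PS R) : vec R := z.2.

(* Kronecker delta and Levi-Civita symbol (eps 0 1 2 = 1) *)
Definition kdelta (a b : 'I_3) : R := (a == b)%:R.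
Definition leviC (a b c : 'I_3) : R :=
  ((b%:R - a%:R) * (c%:R - a%:R) * (c%:R - b%:R)) / 2.

Definition dot (u v : vec R) : R := \sum_(i < 3) u 0 i * v 0 i.
Definition enorm (u : vec R) : R := Num.sqrt (dot u u).
Definition cross (u v : vec R) : vec R :=
  \row_(a < 3) \sum_(b < 3) \sum_(c < 3) leviC a b c * u 0 b * v 0 c.

Definition ex (i : 'I_3) : PS R := (delta_mx 0 i, 0, 0).
Definition ep (i : 'I_3) : PS R := (0, delta_mx 0 i, 0).
Definition es (i : 'I_3) : PS R := (0, 0, delta_mx 0 i).

(* Poisson bracket of form (ii):
   {f,g} = d_x f . d_p g - d_p f . d_x g + s . (d_s f x d_s g),
   which gives {x^a,p_b} = delta_ab, {s_a,s_b} = eps_abc s^c, and s Poisson-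
   commuting with x, p.  Only the tangential part of d_s matters on |s|=S. *)
Definition pb (f g : PS R -> R) (z : PS R) : R :=
  \sum_(i < 3) ('D_(ex i) f z * 'D_(ep i) g z - 'D_(ep i) f z * 'D_(ex i) g z)
  + \sum_(a < 3) \sum_(b < 3) \sum_(c < 3)
      leviC a b c * sof z 0 a * 'D_(es b) f z * 'D_(es c) g z.

Definition Pgen (a : 'I_3) (z : PS R) : R := pof z 0 a.
Definition Jgen (a b : 'I_3) (z : PS R) : R :=
  xof z 0 a * pof z 0 b - xof z 0 b * pof z 0 a
  + \sum_(c < 3) leviC a b c * sof z 0 c.

Definition Gamma (S : R) : set (PS R) := [set z | enorm (sof z) = S].
(* Gamma^* minus {s parallel or antiparallel to P-hat} *)
Definition phat (z : PS R) : vec R := (enorm (pof z))^-1 *: pof z.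
Definition s_parallel_Phat (z : PS R) : Prop :=
  exists k : R, sof z = k *: phat z.
Definition Gamma_good (S : R) : set (PS R) :=
  [set z | Gamma S z /\ enorm (pof z) != 0 /\ ~ s_parallel_Phat z].

End Defs.

Definition C1_on (R : realType) (V W : normedModType R) (U : set V) (f : V -> W)
  : Prop :=
  open U /\ (forall z, U z -> differentiable f z) /\
  (forall v z, U z -> {for z, continuous (fun w => 'D_v f w)}).

Arguments kdelta {R}. Arguments leviC {R}. Arguments ex {R}. Arguments ep {R}.
Arguments es {R}. Arguments Pgen {R}. Arguments Jgen {R}.

From HB Require Import structures.
From mathcomp Require Import all_boot all_order all_algebra.
From mathcomp Require Import all_classical all_reals all_analysis.
From mathcomp Require Import ring lra.
Set Implicit Arguments. Unset Strict Implicit. Unset Printing Implicit Defensive.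
Import Order.TTheory GRing.Theory Num.Theory.
Import numFieldNormedType.Exports.
Local Open Scope classical_set_scope.
Local Open Scope ring_scope.

(* The brackets with P_a and J_ab are directional derivatives along
   translations and infinitesimal rotations, so the hypotheses integrate to
   (i) A(x, p, s) = A(0, p, s) and (ii) A(R z) = R A(z) for the rotations R of
   the coordinate planes (0,1) and (1,2).  Every point of Gamma^* off the
   parallel locus is carried by three such rotations to a canonical point
   (0, r e_2, sqrt(S^2 - t^2) e_0 + t e_2) with invariants (r, t); there
   A.P = 0 gives the decomposition with B, C read off from two components of
   A, and covariance transports it back.  Finally B and C are C^1 because the
   canonical point depends smoothly on (r, t). *)

Notation o0 := (@Ordinal 3 0 isT).
Notation o1 := (@Ordinal 3 1 isT).
Notation o2 := (@Ordinal 3 2 isT).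

Section ThreeSpace.
Variable R : realType.

Lemma sum_ord3 (F : 'I_3 -> R) : \sum_(i < 3) F i = F o0 + F o1 + F o2.
Proof.
rewrite !big_ord_recr big_ord0 /= add0r.
by congr (F _ + F _ + F _); apply: val_inj.
Qed.

Lemma sum_leviC (F : 'I_3 -> 'I_3 -> 'I_3 -> R) :
  \sum_(a < 3) \sum_(b < 3) \sum_(c < 3) leviC a b c * F a b c =
  F o0 o1 o2 + F o1 o2 o0 + F o2 o0 o1 - F o0 o2 o1 - F o2 o1 o0 - F o1 o0 o2.
Proof. by rewrite !sum_ord3 /leviC /=; lra. Qed.

Lemma ord3_ind (P : 'I_3 -> Prop) : P o0 -> P o1 -> P o2 -> forall a, P a.
Proof.
move=> h0 h1 h2 [[|[|[|n]]] H] //.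
- by rewrite (_ : Ordinal H = o0) //; apply: val_inj.
- by rewrite (_ : Ordinal H = o1) //; apply: val_inj.
- by rewrite (_ : Ordinal H = o2) //; apply: val_inj.
Qed.

Lemma ord3_neq01 : (o0 == o1) = false. Proof. by []. Qed.
Lemma ord3_neq02 : (o0 == o2) = false. Proof. by []. Qed.
Lemma ord3_neq10 : (o1 == o0) = false. Proof. by []. Qed.
Lemma ord3_neq12 : (o1 == o2) = false. Proof. by []. Qed.
Lemma ord3_neq20 : (o2 == o0) = false. Proof. by []. Qed.
Lemma ord3_neq21 : (o2 == o1) = false. Proof. by []. Qed.
Definition ord3_neqE :=
  (ord3_neq01, ord3_neq02, ord3_neq10, ord3_neq12, ord3_neq20, ord3_neq21).

Lemma natr_true : true%:R = 1 :> R. Proof. by []. Qed.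
Lemma natr_false : false%:R = 0 :> R. Proof. by []. Qed.

Lemma vec3P (u v : vec R) :
  u 0 o0 = v 0 o0 -> u 0 o1 = v 0 o1 -> u 0 o2 = v 0 o2 -> u = v.
Proof.
move=> h0 h1 h2; apply/rowP => j.
by apply: (@ord3_ind (fun j => u 0 j = v 0 j)).
Qed.

Lemma dotE (u v : vec R) :
  dot u v = u 0 o0 * v 0 o0 + u 0 o1 * v 0 o1 + u 0 o2 * v 0 o2.
Proof. by rewrite /dot sum_ord3. Qed.

Lemma crossE (u v : vec R) :
  cross u v 0 o0 = u 0 o1 * v 0 o2 - u 0 o2 * v 0 o1 /\
  cross u v 0 o1 = u 0 o2 * v 0 o0 - u 0 o0 * v 0 o2 /\
  cross u v 0 o2 = u 0 o0 * v 0 o1 - u 0 o1 * v 0 o0.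
Proof.
rewrite /cross !mxE !sum_ord3 /leviC /=.
move: (u 0 o0) (u 0 o1) (u 0 o2) (v 0 o0) (v 0 o1) (v 0 o2) => a0 a1 a2 b0 b1 b2.
by split; [|split]; lra.
Qed.

Lemma sum_delta (F : 'I_3 -> R) i : \sum_(c < 3) F c * (c == i)%:R = F i.
Proof.
rewrite (bigD1 i) //= eqxx mulr1 big1 ?addr0 // => c /negbTE ->.
by rewrite mulr0.
Qed.

Lemma pairP3 (u v : PS R) :
  xof u = xof v -> pof u = pof v -> sof u = sof v -> u = v.
Proof. by case: u => [[? ?] ?]; case: v => [[? ?] ?]; rewrite /xof /pof /sof /= => -> -> ->. Qed.

Lemma PS_eta (z : PS R) : z = (xof z, pof z, sof z).
Proof. by case: z => [[]]. Qed.

Lemma xof_ex i j : xof (ex i : PS R) 0 j = (j == i)%:R.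
Proof. by rewrite /xof /ex /= mxE eqxx. Qed.
Lemma pof_ex i j : pof (ex i : PS R) 0 j = 0.
Proof. by rewrite /pof /ex /= mxE. Qed.
Lemma sof_ex i j : sof (ex i : PS R) 0 j = 0.
Proof. by rewrite /sof /ex /= mxE. Qed.
Lemma xof_ep i j : xof (ep i : PS R) 0 j = 0.
Proof. by rewrite /xof /ep /= mxE. Qed.
Lemma pof_ep i j : pof (ep i : PS R) 0 j = (j == i)%:R.
Proof. by rewrite /pof /ep /= mxE eqxx. Qed.
Lemma sof_ep i j : sof (ep i : PS R) 0 j = 0.
Proof. by rewrite /sof /ep /= mxE. Qed.
Lemma xof_es i j : xof (es i : PS R) 0 j = 0.
Proof. by rewrite /xof /es /= mxE. Qed.
Lemma pof_es i j : pof (es i : PS R) 0 j = 0.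
Proof. by rewrite /pof /es /= mxE. Qed.
Lemma sof_es i j : sof (es i : PS R) 0 j = (j == i)%:R.
Proof. by rewrite /sof /es /= mxE eqxx. Qed.

End ThreeSpace.

Section DirectionalDerivatives.
Variable R : realType.

Lemma derive_valE (V W : normedModType R) (f : V -> W) a v df :
  is_derive a v f df -> 'D_v f a = df.
Proof. by move=> H; apply: derive_val. Qed.

Lemma is_derive_derivable (V W : normedModType R) (f : V -> W) a v df :
  is_derive a v f df -> derivable f a v.
Proof. by move=> H; apply: ex_derive. Qed.

Lemma scale_regE (k x : R) : k *: x = k * x. Proof. by []. Qed.

Lemma is_derive_linfun (V W : normedModType R) (f : V -> W)
  (hf : forall (a : R) u v, f (a *: u + v) = a *: f u + f v) x v :
  is_derive x v f (f v).
Proof.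
have quot h : h != 0 -> h^-1 *: ((f \o shift x) (h *: v) - f x) = f v.
  by move=> h0 /=; rewrite /shift hf addrK scalerA mulVf // scale1r.
have near_quot : {near (0:R)^', (cst (f v)) =1
     (fun h : R => h^-1 *: ((f \o shift x) (h *: v) - f x))}.
  by near=> h; rewrite /= quot //; near: h; exact: nbhs_dnbhs_neq.
apply: DeriveDef.
  apply/cvg_ex; exists (f v).
  exact: (cvg_trans (near_eq_cvg near_quot) (cvg_cst _)).
apply: cvg_lim => //; exact: (cvg_trans (near_eq_cvg near_quot) (cvg_cst _)).
Unshelve. all: by end_near.
Qed.

Lemma deriveDdir (V : normedModType R) (f : V -> R) (z u v : V) :
  differentiable f z -> 'D_(u + v) f z = 'D_u f z + 'D_v f z.
Proof. by move=> df; rewrite !deriveE // linearD. Qed.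

Lemma deriveZdir (V : normedModType R) (f : V -> R) (z u : V) (k : R) :
  differentiable f z -> 'D_(k *: u) f z = k * 'D_u f z.
Proof. by move=> df; rewrite !deriveE // linearZ. Qed.

Lemma derive1_scale (f : R -> R) y (r : R) :
  differentiable f y -> 'D_r f y = r * 'D_1 f y.
Proof. by move=> df; rewrite -[r in 'D_r _ _]mulr1 deriveZdir. Qed.

Lemma derive_comp (U V W : normedModType R) (g : U -> V) (f : V -> W) x v :
  differentiable g x -> differentiable f (g x) ->
  'D_v (f \o g) x = 'D_('D_v g x) f (g x).
Proof.
move=> dg df; rewrite deriveE; last exact: differentiable_comp.
by rewrite diff_comp // /= -deriveE // -deriveE.
Qed.

Lemma deriveZl_const (V W : normedModType R) (k : V -> R) (E : W) x v :
  differentiable k x -> 'D_v (fun z => k z *: E) x = 'D_v k x *: E.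
Proof.
move=> dk; rewrite deriveE; last exact: differentiableZl.
by rewrite diffZl // -deriveE.
Qed.

Lemma differentiable_coord_comp (V : normedModType R) (A : V -> 'rV[R]_3) z k :
  differentiable A z -> differentiable (fun w => A w 0 k) z.
Proof. by move=> dA; exact: (differentiable_comp dA (differentiable_coord _ _ _)). Qed.

Lemma derive_coord (V : normedModType R) (A : V -> 'rV[R]_3) (y e : V) k :
  differentiable A y -> 'D_e (fun w => A w 0 k) y = ('D_e A y) 0 k.
Proof.
move=> dA.
pose cf := fun N : 'M[R]_(1,3) => N 0 k.
have @f : {linear 'M[R]_(1, 3) -> R}.
  by exists cf; do 2![eexists]; do ?[constructor];
     rewrite /cf ?mxE// => ? *; rewrite ?mxE//; move=> ?; rewrite !mxE.
have fE : cf = f by [].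
have dc : differentiable cf (A y).
  by rewrite fE; apply/linear_differentiable/coord_continuous.
change (fun w => A w 0 k) with (cf \o A).
rewrite deriveE; last exact: differentiable_comp.
rewrite diff_comp // /= [in RHS]deriveE // fE diff_lin //; exact: coord_continuous.
Qed.

Lemma is_derive_plane_curve (V : normedModType R) (f : V -> R) (W U U' : V)
    (g h : R -> R) (t dg dh : R) :
  is_derive t 1 g dg -> is_derive t 1 h dh ->
  differentiable f (W + g t *: U + h t *: U') ->
  is_derive t 1 (fun t => f (W + g t *: U + h t *: U'))
    ('D_(dg *: U + dh *: U') f (W + g t *: U + h t *: U')).
Proof.
move=> Dg Dh df.
have gd : differentiable g t by apply/derivable1_diffP; exact: ex_derive.
have hd : differentiable h t by apply/derivable1_diffP; exact: ex_derive.
pose gam := (cst W + (fun r => g r *: U)) + (fun r => h r *: U').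
have dgam0 : differentiable (cst W + (fun r => g r *: U)) t.
  by apply: differentiableD; [exact: differentiable_cst | exact: differentiableZl].
have dgam : differentiable gam t.
  by apply: differentiableD => //; exact: differentiableZl.
have Dgam : 'd gam t 1 = dg *: U + dh *: U'.
  rewrite diffD //; last exact: differentiableZl.
  rewrite diffD; [|exact: differentiable_cst|exact: differentiableZl].
  rewrite !diffZl // diff_cst /= !diff1E // !derive1E (derive_valE Dg).
  by rewrite (derive_valE Dh) !scale1r add0r.
have -> : (fun t => f (W + g t *: U + h t *: U')) = f \o gam by apply/funext.
apply: DeriveDef; first by apply: diff_derivable; exact: differentiable_comp.
by rewrite deriveE ?(diff_comp dgam df) /= ?Dgam -?deriveE //;
  exact: differentiable_comp.
Qed.

Lemma differentiable_fst (q : R * R) : differentiable (fst : R * R -> R) q.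
Proof.
have lin : linear (fst : R * R -> R) by [].
pose L : {linear (R * R)%type -> R} :=
  HB.pack (fst : R * R -> R) (GRing.isLinear.Build _ _ _ _ _ lin).
have -> : (fst : R * R -> R) = L by [].
by apply: linear_differentiable => x; exact: cvg_fst.
Qed.

Lemma differentiable_snd (q : R * R) : differentiable (snd : R * R -> R) q.
Proof.
have lin : linear (snd : R * R -> R) by [].
pose L : {linear (R * R)%type -> R} :=
  HB.pack (snd : R * R -> R) (GRing.isLinear.Build _ _ _ _ _ lin).
have -> : (snd : R * R -> R) = L by [].
by apply: linear_differentiable => x; exact: cvg_snd.
Qed.

Lemma derive_fst (q v : R * R) : 'D_v (fst : R * R -> R) q = v.1.
Proof. by apply: derive_valE; apply: is_derive_linfun. Qed.
Lemma derive_snd (q v : R * R) : 'D_v (snd : R * R -> R) q = v.2.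
Proof. by apply: derive_valE; apply: is_derive_linfun. Qed.

End DirectionalDerivatives.

Section PoissonBrackets.
Variable R : realType.

Definition qturnv (a b : 'I_3) (y : vec R) : vec R :=
  (- y 0 b) *: delta_mx 0 a + y 0 a *: delta_mx 0 b.
Definition rot_gen (a b : 'I_3) (w : PS R) : PS R :=
  (qturnv a b (xof w), qturnv a b (pof w), qturnv a b (sof w)).
Definition plane (a b : 'I_3) := (a == o0) && (b == o1) || (a == o1) && (b == o2).

Lemma pbE (f g : PS R -> R) (z : PS R) : pb f g z =
  ('D_(ex o0) f z * 'D_(ep o0) g z - 'D_(ep o0) f z * 'D_(ex o0) g z)
  + ('D_(ex o1) f z * 'D_(ep o1) g z - 'D_(ep o1) f z * 'D_(ex o1) g z)
  + ('D_(ex o2) f z * 'D_(ep o2) g z - 'D_(ep o2) f z * 'D_(ex o2) g z)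
  + (sof z 0 o0 * ('D_(es o1) f z * 'D_(es o2) g z - 'D_(es o2) f z * 'D_(es o1) g z)
   + sof z 0 o1 * ('D_(es o2) f z * 'D_(es o0) g z - 'D_(es o0) f z * 'D_(es o2) g z)
   + sof z 0 o2 * ('D_(es o0) f z * 'D_(es o1) g z - 'D_(es o1) f z * 'D_(es o0) g z)).
Proof.
rewrite /pb sum_ord3.
under eq_bigr do under eq_bigr do under eq_bigr do rewrite -2!mulrA.
rewrite (sum_leviC (fun a b c => sof z 0 a * ('D_(es b) f z * 'D_(es c) g z))).
have regroup (s0 s1 s2 a0 a1 a2 b0 b1 b2 : R) :
    s0 * (a1 * b2) + s1 * (a2 * b0) + s2 * (a0 * b1)
      - s0 * (a2 * b1) - s2 * (a1 * b0) - s1 * (a0 * b2)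
    = s0 * (a1 * b2 - a2 * b1) + s1 * (a2 * b0 - a0 * b2)
      + s2 * (a0 * b1 - a1 * b0) by ring.
by rewrite regroup.
Qed.

Definition xc (i : 'I_3) (z : PS R) : R := xof z 0 i.
Definition pc (i : 'I_3) (z : PS R) : R := pof z 0 i.

Lemma is_derive_xc i (z v : PS R) : is_derive z v (xc i) (xof v 0 i).
Proof. by apply: is_derive_linfun => a u w; rewrite /xc /xof /= !mxE. Qed.
Lemma is_derive_pc i (z v : PS R) : is_derive z v (pc i) (pof v 0 i).
Proof. by apply: is_derive_linfun => a u w; rewrite /pc /pof /= !mxE. Qed.

Lemma derive_Jgen a b (z v : PS R) : 'D_v (Jgen a b) z =
  xof v 0 a * pof z 0 b + xof z 0 a * pof v 0 b
  - (xof v 0 b * pof z 0 a + xof z 0 b * pof v 0 a)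
  + \sum_(c < 3) leviC a b c * sof v 0 c.
Proof.
pose L (w : PS R) := \sum_(c < 3) leviC a b c * sof w 0 c.
have dL : is_derive z v L (L v).
  apply: is_derive_linfun => k u w; rewrite /L scaler_sumr -big_split /=.
  by apply: eq_bigr => c _; rewrite /sof /= !mxE !scale_regE; ring.
have -> : Jgen a b = (xc a * pc b - xc b * pc a) + L by apply/funext.
have dxa := is_derive_xc a z v; have dxb := is_derive_xc b z v.
have dpa := is_derive_pc a z v; have dpb := is_derive_pc b z v.
rewrite deriveD; last 2 first.
- by apply: derivableB; exact: derivableM.
- exact: ex_derive.
rewrite deriveB; try exact: derivableM.
rewrite !deriveM // (derive_valE dxa) (derive_valE dxb) (derive_valE dpa).
by rewrite (derive_valE dpb) (derive_valE dL) !scale_regE /xc /pc /L /=; ring.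
Qed.

Lemma derive_Jgen_ex a b i (z : PS R) :
  'D_(ex i) (Jgen a b) z = (a == i)%:R * pof z 0 b - (b == i)%:R * pof z 0 a.
Proof.
rewrite derive_Jgen !xof_ex ?pof_ex.
under eq_bigr do rewrite sof_ex.
by rewrite big1 => [|c _]; rewrite ?mulr0 ?addr0.
Qed.

Lemma derive_Jgen_ep a b i (z : PS R) :
  'D_(ep i) (Jgen a b) z = xof z 0 a * (b == i)%:R - xof z 0 b * (a == i)%:R.
Proof.
rewrite derive_Jgen !xof_ep ?pof_ep.
under eq_bigr do rewrite sof_ep.
by rewrite big1 => [|c _]; rewrite ?mulr0 // !mul0r !add0r !addr0.
Qed.

Lemma derive_Jgen_es a b i (z : PS R) : 'D_(es i) (Jgen a b) z = leviC a b i.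
Proof.
rewrite derive_Jgen !xof_es ?pof_es.
under eq_bigr do rewrite sof_es.
by rewrite sum_delta !mul0r !mulr0 !addr0 subrr add0r.
Qed.

Lemma pb_Pgen (g : PS R -> R) a (z : PS R) : pb (Pgen a) g z = - 'D_(ex a) g z.
Proof.
have D v : 'D_v (Pgen a) z = pof v 0 a by rewrite (derive_valE (is_derive_pc a z v)).
rewrite pbE !D !pof_ep ?pof_ex ?pof_es.
move: a D; apply: ord3_ind => D; rewrite !eqxx ?ord3_neqE natr_true natr_false;
move: ('D_(ep o0) g z) ('D_(ep o1) g z) ('D_(ep o2) g z) => d0 d1 d2;
move: ('D_(es o0) g z) ('D_(es o1) g z) ('D_(es o2) g z) => d6 d7 d8;
move: ('D_(ex o0) g z) ('D_(ex o1) g z) ('D_(ex o2) g z) => d3 d4 d5;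
move: (sof z 0 o0) (sof z 0 o1) (sof z 0 o2) => s0 s1 s2; ring.
Qed.

Lemma rot_genE a b (w : PS R) : rot_gen a b w =
  (- xof w 0 b) *: ex a + xof w 0 a *: ex b + (- pof w 0 b) *: ep a
  + pof w 0 a *: ep b + (- sof w 0 b) *: es a + sof w 0 a *: es b.
Proof.
rewrite /rot_gen /qturnv /ex /ep /es /=; case: w => [[x p] sv] /=.
by congr (_, _, _); apply/rowP => j; rewrite !mxE /xof /pof /sof /=; ring.
Qed.

Lemma derive_rot_gen a b (f : PS R -> R) (w : PS R) : differentiable f w ->
  'D_(rot_gen a b w) f w =
  - xof w 0 b * 'D_(ex a) f w + xof w 0 a * 'D_(ex b) f w
  - pof w 0 b * 'D_(ep a) f w + pof w 0 a * 'D_(ep b) f w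
  - sof w 0 b * 'D_(es a) f w + sof w 0 a * 'D_(es b) f w.
Proof. by move=> df; rewrite rot_genE !deriveDdir // !deriveZdir // !mulNr. Qed.

Lemma pb_Jgen a b (f : PS R -> R) (w : PS R) : plane a b -> differentiable f w ->
  pb (Jgen a b) f w = - 'D_(rot_gen a b w) f w.
Proof.
move=> pl df; rewrite derive_rot_gen // pbE.
rewrite !derive_Jgen_ex !derive_Jgen_ep !derive_Jgen_es /leviC.
case/orP: pl => /andP[/eqP-> /eqP->]; rewrite /= ?eqxx ?ord3_neqE ?natr_true ?natr_false;
move: ('D_(ex o0) f w) ('D_(ex o1) f w) ('D_(ex o2) f w) => d0 d1 d2;
move: ('D_(ep o0) f w) ('D_(ep o1) f w) ('D_(ep o2) f w) => d3 d4 d5;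
move: ('D_(es o0) f w) ('D_(es o1) f w) ('D_(es o2) f w) => d6 d7 d8;
move: (xof w 0 o0) (xof w 0 o1) (xof w 0 o2) (pof w 0 o0) (pof w 0 o1)
  (pof w 0 o2) (sof w 0 o0) (sof w 0 o1) (sof w 0 o2) => x0 x1 x2 p0 p1 p2 s0 s1 s2;
by field.
Qed.

End PoissonBrackets.

Section Rotations.
Variable R : realType.

Definition projv (a b : 'I_3) (y : vec R) : vec R :=
  y 0 a *: delta_mx 0 a + y 0 b *: delta_mx 0 b.
Definition rotv a b (c s : R) (y : vec R) : vec R :=
  y - projv a b y + c *: projv a b y + s *: qturnv a b y.
Definition rotPS a b (c s : R) (w : PS R) : PS R :=
  (rotv a b c s (xof w), rotv a b c s (pof w), rotv a b c s (sof w)).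
Definition projPS a b (w : PS R) : PS R :=
  (projv a b (xof w), projv a b (pof w), projv a b (sof w)).

Lemma rot01E c s (y : vec R) :
  rotv o0 o1 c s y 0 o0 = c * y 0 o0 - s * y 0 o1 /\
  rotv o0 o1 c s y 0 o1 = s * y 0 o0 + c * y 0 o1 /\
  rotv o0 o1 c s y 0 o2 = y 0 o2.
Proof.
rewrite /rotv /projv /qturnv !mxE !eqxx ?ord3_neqE /=.
move: (y 0 o0) (y 0 o1) (y 0 o2) => y0 y1 y2.
by split; [|split]; ring.
Qed.

Lemma rot12E c s (y : vec R) :
  rotv o1 o2 c s y 0 o0 = y 0 o0 /\
  rotv o1 o2 c s y 0 o1 = c * y 0 o1 - s * y 0 o2 /\
  rotv o1 o2 c s y 0 o2 = s * y 0 o1 + c * y 0 o2.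
Proof.
rewrite /rotv /projv /qturnv !mxE !eqxx ?ord3_neqE /=.
move: (y 0 o0) (y 0 o1) (y 0 o2) => y0 y1 y2.
by split; [|split]; ring.
Qed.

Lemma rotv_lin a b c s (k : R) (u v : vec R) :
  rotv a b c s (k *: u + v) = k *: rotv a b c s u + rotv a b c s v.
Proof. by apply/rowP => j; rewrite /rotv /projv /qturnv !mxE; ring. Qed.

Lemma rotvZ a b c s k (u : vec R) : rotv a b c s (k *: u) = k *: rotv a b c s u.
Proof. by apply/rowP => j; rewrite /rotv /projv /qturnv !mxE; ring. Qed.

Lemma rotv0 a b c s : rotv a b c s (0 : vec R) = 0.
Proof. by apply/rowP => j; rewrite /rotv /projv /qturnv !mxE; ring. Qed.

Lemma rotv_id a b (y : vec R) : rotv a b 1 0 y = y.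
Proof. by rewrite /rotv scale1r scale0r addr0 subrK. Qed.

Lemma rotPS_id a b (z : PS R) : rotPS a b 1 0 z = z.
Proof. by rewrite /rotPS !rotv_id -PS_eta. Qed.

Lemma rotPS_curve a b c s (w : PS R) :
  rotPS a b c s w = (w - projPS a b w) + c *: projPS a b w + s *: rot_gen a b w.
Proof. by case: w => [[x p] sv]. Qed.

Lemma qturnv_rot a b c s (y : vec R) : plane a b ->
  qturnv a b (rotv a b c s y) = (- s) *: projv a b y + c *: qturnv a b y.
Proof.
case/orP => /andP[/eqP-> /eqP->];
  [have [E0 [E1 E2]] := rot01E c s y | have [E0 [E1 E2]] := rot12E c s y];
apply/vec3P; rewrite /qturnv /projv !mxE ?E0 ?E1 ?E2 !eqxx ?ord3_neqE /=;
move: (y 0 o0) (y 0 o1) (y 0 o2) => y0 y1 y2; ring.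
Qed.

Lemma rot_gen_rot a b c s (w : PS R) : plane a b ->
  rot_gen a b (rotPS a b c s w) = (- s) *: projPS a b w + c *: rot_gen a b w.
Proof. by move=> pl; rewrite /rot_gen /rotPS /projPS /xof /pof /sof /= !qturnv_rot. Qed.

Lemma unit_circle_mul (c s x : R) : c ^+ 2 + s ^+ 2 = 1 -> (c ^+ 2 + s ^+ 2) * x = x.
Proof. by move=> ->; rewrite mul1r. Qed.

Lemma unit_circle_eq (c s K L M : R) : c ^+ 2 + s ^+ 2 = 1 ->
  L - M = (c ^+ 2 + s ^+ 2 - 1) * K -> L = M.
Proof. by move=> -> /eqP; rewrite subrr mul0r subr_eq0 => /eqP. Qed.

Lemma rotv_inv a b c s (y : vec R) : plane a b -> c ^+ 2 + s ^+ 2 = 1 ->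
  rotv a b c (- s) (rotv a b c s y) = y.
Proof.
move=> + cs; case/orP => /andP[/eqP-> /eqP->].
- have [E0 [E1 E2]] := rot01E c s y.
  have [F0 [F1 F2]] := rot01E c (- s) (rotv o0 o1 c s y).
  apply/vec3P; rewrite ?F0 ?F1 ?F2 ?E0 ?E1 ?E2;
  move: (y 0 o0) (y 0 o1) (y 0 o2) => y0 y1 y2;
  [apply: (eq_trans _ (unit_circle_mul y0 cs))
  | apply: (eq_trans _ (unit_circle_mul y1 cs)) | by []]; ring.
- have [E0 [E1 E2]] := rot12E c s y.
  have [F0 [F1 F2]] := rot12E c (- s) (rotv o1 o2 c s y).
  apply/vec3P; rewrite ?F0 ?F1 ?F2 ?E0 ?E1 ?E2;
  move: (y 0 o0) (y 0 o1) (y 0 o2) => y0 y1 y2;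
  [by [] | apply: (eq_trans _ (unit_circle_mul y1 cs))
  | apply: (eq_trans _ (unit_circle_mul y2 cs))]; ring.
Qed.

Lemma rotv_inj a b c s (u v : vec R) : plane a b -> c ^+ 2 + s ^+ 2 = 1 ->
  rotv a b c s u = rotv a b c s v -> u = v.
Proof. by move=> pl cs E; rewrite -(rotv_inv u pl cs) E rotv_inv. Qed.

Lemma dot_rot a b c s (u v : vec R) : plane a b -> c ^+ 2 + s ^+ 2 = 1 ->
  dot (rotv a b c s u) (rotv a b c s v) = dot u v.
Proof.
move=> + cs; rewrite !dotE; case/orP => /andP[/eqP-> /eqP->].
- have [E0 [E1 E2]] := rot01E c s u; have [F0 [F1 F2]] := rot01E c s v.
  rewrite E0 E1 E2 F0 F1 F2.
  move: (u 0 o0) (u 0 o1) (u 0 o2) (v 0 o0) (v 0 o1) (v 0 o2) => a0 a1 a2 b0 b1 b2.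
  by apply: (@unit_circle_eq c s (a0 * b0 + a1 * b1) _ _ cs); ring.
- have [E0 [E1 E2]] := rot12E c s u; have [F0 [F1 F2]] := rot12E c s v.
  rewrite E0 E1 E2 F0 F1 F2.
  move: (u 0 o0) (u 0 o1) (u 0 o2) (v 0 o0) (v 0 o1) (v 0 o2) => a0 a1 a2 b0 b1 b2.
  by apply: (@unit_circle_eq c s (a1 * b1 + a2 * b2) _ _ cs); ring.
Qed.

Lemma cross_rot a b c s (u v : vec R) : plane a b -> c ^+ 2 + s ^+ 2 = 1 ->
  cross (rotv a b c s u) (rotv a b c s v) = rotv a b c s (cross u v).
Proof.
move=> + cs.
have [C0 [C1 C2]] := crossE (rotv a b c s u) (rotv a b c s v).
have [D0 [D1 D2]] := crossE u v.
case/orP => /andP[/eqP ea /eqP eb]; subst a b.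
- have [E0 [E1 E2]] := rot01E c s u; have [F0 [F1 F2]] := rot01E c s v.
  have [G0 [G1 G2]] := rot01E c s (cross u v).
  apply/vec3P; rewrite ?C0 ?C1 ?C2 ?G0 ?G1 ?G2 ?D0 ?D1 ?D2 ?E0 ?E1 ?E2 ?F0 ?F1 ?F2;
  move: (u 0 o0) (u 0 o1) (u 0 o2) (v 0 o0) (v 0 o1) (v 0 o2) => a0 a1 a2 b0 b1 b2;
  [ring | ring | apply: (eq_trans _ (unit_circle_mul (a0 * b1 - a1 * b0) cs)); ring].
- have [E0 [E1 E2]] := rot12E c s u; have [F0 [F1 F2]] := rot12E c s v.
  have [G0 [G1 G2]] := rot12E c s (cross u v).
  apply/vec3P; rewrite ?C0 ?C1 ?C2 ?G0 ?G1 ?G2 ?D0 ?D1 ?D2 ?E0 ?E1 ?E2 ?F0 ?F1 ?F2;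
  move: (u 0 o0) (u 0 o1) (u 0 o2) (v 0 o0) (v 0 o1) (v 0 o2) => a0 a1 a2 b0 b1 b2;
  [apply: (eq_trans _ (unit_circle_mul (a1 * b2 - a2 * b1) cs)); ring | ring | ring].
Qed.

Lemma enorm_rot a b c s (u : vec R) : plane a b -> c ^+ 2 + s ^+ 2 = 1 ->
  enorm (rotv a b c s u) = enorm u.
Proof. by move=> pl cs; rewrite /enorm dot_rot. Qed.

Lemma Gamma_rot (S : R) a b c s (z : PS R) : plane a b -> c ^+ 2 + s ^+ 2 = 1 ->
  Gamma S z -> Gamma S (rotPS a b c s z).
Proof. by move=> pl cs; rewrite /Gamma /= /sof /= enorm_rot. Qed.

Lemma phat_rot a b c s (w : PS R) : plane a b -> c ^+ 2 + s ^+ 2 = 1 ->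
  phat (rotPS a b c s w) = rotv a b c s (phat w).
Proof. by move=> pl cs; rewrite /phat rotvZ /pof /= enorm_rot. Qed.

Lemma par_rot a b c s (w : PS R) : plane a b -> c ^+ 2 + s ^+ 2 = 1 ->
  s_parallel_Phat (rotPS a b c s w) -> s_parallel_Phat w.
Proof.
move=> pl cs [k Hk]; exists k; apply: (rotv_inj pl cs).
by rewrite rotvZ -phat_rot.
Qed.

End Rotations.

Section Symmetries.
Variable R : realType.

Lemma rotation_ode_solution (a b : 'I_3) (h : 'I_3 -> R -> R) (t : R) :
  a != b ->
  (forall k (r : R), is_derive r (1 : R) (h k)
     (- (kdelta a k * h b r - kdelta b k * h a r))) ->
  [/\ h a t = cos t * h a 0 - sin t * h b 0,
      h b t = sin t * h a 0 + cos t * h b 0 &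
      forall k, k != a -> k != b -> h k t = h k 0].
Proof.
move=> ab hder.
have [kaa kbb] : kdelta a a = 1 :> R /\ kdelta b b = 1 :> R by rewrite /kdelta !eqxx.
have kab : kdelta a b = 0 :> R by rewrite /kdelta (negbTE ab).
have kba : kdelta b a = 0 :> R by rewrite /kdelta eq_sym (negbTE ab).
(* I = h_a cos + h_b sin and J = h_b cos - h_a sin are first integrals *)
have dI r : is_derive r (1:R) (h a * cos + h b * sin) 0.
  apply: (is_derive_eq (is_deriveD (is_deriveM (hder a r) (is_derive_cos r))
                                 (is_deriveM (hder b r) (is_derive_sin r)))).
  rewrite kaa kbb kab kba !scale_regE.
  by move: (h a r) (h b r) (cos r) (sin r) => x y c s; ring.
have dJ r : is_derive r (1:R) (h b * cos - h a * sin) 0.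
  apply: (is_derive_eq (is_deriveB (is_deriveM (hder b r) (is_derive_cos r))
                                 (is_deriveM (hder a r) (is_derive_sin r)))).
  rewrite kaa kbb kab kba !scale_regE.
  by move: (h a r) (h b r) (cos r) (sin r) => x y c s; ring.
have It : h a t * cos t + h b t * sin t = h a 0 * cos 0 + h b 0 * sin 0.
  exact: (is_derive_0_is_cst (f := h a * cos + h b * sin) t 0 dI).
have Jt : h b t * cos t - h a t * sin t = h b 0 * cos 0 - h a 0 * sin 0.
  exact: (is_derive_0_is_cst (f := h b * cos - h a * sin) t 0 dJ).
rewrite cos0 sin0 !mulr1 !mulr0 addr0 subr0 in It Jt.
have cs := cos2Dsin2 t.
split.
- rewrite -It -Jt; move: (h a t) (h b t) (cos t) (sin t) cs => x y c s cs'.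
  by apply: (@unit_circle_eq _ c s (- x) _ _ cs'); ring.
- rewrite -It -Jt; move: (h a t) (h b t) (cos t) (sin t) cs => x y c s cs'.
  by apply: (@unit_circle_eq _ c s (- y) _ _ cs'); ring.
- move=> k ka kb; apply: is_derive_0_is_cst => r.
  apply: (is_derive_eq (hder k r)).
  by rewrite /kdelta eq_sym (negbTE ka) eq_sym (negbTE kb) !mul0r subrr oppr0.
Qed.

Variables (S : R) (A : PS R -> vec R).
Hypothesis dA : forall z, Gamma S z -> differentiable A z.

Lemma translation_invariant :
  (forall a k z, Gamma S z -> pb (Pgen a) (fun w => A w 0 k) z = 0) ->
  forall z, Gamma S z -> A z = A (0, pof z, sof z).
Proof.
move=> HP z Gz.
pose W : PS R := (0, pof z, sof z).
pose U : PS R := (xof z, 0, 0).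
have line r : W + r *: U = (r *: xof z, pof z, sof z).
  by apply: pairP3; rewrite /xof /pof /sof /= ?scaler0 ?addr0 ?add0r.
have G r : Gamma S (W + r *: U) by rewrite line.
have Udec : U = xof z 0 o0 *: ex o0 + xof z 0 o1 *: ex o1 + xof z 0 o2 *: ex o2.
  apply: pairP3 => /=; apply/vec3P; rewrite /xof /pof /sof /= !mxE ?eqxx ?ord3_neqE /=;
  move: (z.1.1 0 o0) (z.1.1 0 o1) (z.1.1 0 o2) => x0 x1 x2; ring.
apply/rowP => k.
pose f (w : PS R) := A w 0 k.
have Z i w : Gamma S w -> 'D_(ex i) f w = 0.
  by move=> Gw; apply/eqP; rewrite -oppr_eq0 -pb_Pgen HP.
have hd r : is_derive r (1:R) (fun r => f (W + r *: U)) 0.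
  have dk : differentiable f (W + r *: U + 0 *: 0).
    by rewrite scale0r addr0; exact: differentiable_coord_comp (dA (G r)).
  have curve := is_derive_plane_curve (is_derive_id r 1) (is_derive_cst 0 r 1) dk.
  have line_eq : (fun t => f (W + id t *: U + cst 0 t *: 0)) = (fun t => f (W + t *: U)).
    by apply/funext => t; rewrite /= scaler0 addr0.
  rewrite line_eq /= ?scaler0 ?addr0 ?scale1r ?scale0r ?addr0 in curve.
  apply: (is_derive_eq curve).
  have df : differentiable f (W + r *: U) by exact: differentiable_coord_comp (dA (G r)).
  move: df (G r); set w := W + r *: U => df Gw.
  by rewrite Udec !deriveDdir // !deriveZdir // !Z // !mulr0 !addr0.
have E := is_derive_0_is_cst 1 0 hd.
by rewrite /f !line scale1r scale0r -PS_eta in E.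
Qed.

Variables (a b : 'I_3).
Hypothesis pl : plane a b.
Hypothesis HJ : forall k z, Gamma S z ->
  pb (Jgen a b) (fun w => A w 0 k) z = kdelta a k * A z 0 b - kdelta b k * A z 0 a.

(* along the rotation orbit, the bracket relation is a differential equation *)
Lemma is_derive_along_rotation (z : PS R) k r : Gamma S z ->
  is_derive r (1 : R) (fun t => A (rotPS a b (cos t) (sin t) z) 0 k)
    (- (kdelta a k * A (rotPS a b (cos r) (sin r) z) 0 b
        - kdelta b k * A (rotPS a b (cos r) (sin r) z) 0 a)).
Proof.
move=> Gz.
have Gr : Gamma S (rotPS a b (cos r) (sin r) z).
  by apply: Gamma_rot => //; exact: cos2Dsin2.
have dk := differentiable_coord_comp k (dA Gr).
rewrite rotPS_curve in dk.
under eq_fun do rewrite rotPS_curve.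
apply: (is_derive_eq (is_derive_plane_curve (is_derive_cos r) (is_derive_sin r) dk)).
by rewrite -rotPS_curve -rot_gen_rot // -HJ // pb_Jgen ?opprK.
Qed.

Lemma rotation_equivariant (z : PS R) t : Gamma S z ->
  A (rotPS a b (cos t) (sin t) z) = rotv a b (cos t) (sin t) (A z).
Proof.
move=> Gz.
pose h k r := A (rotPS a b (cos r) (sin r) z) 0 k.
have ab : a != b by case/orP: pl => /andP[/eqP-> /eqP->].
have [Ha Hb Hk] := rotation_ode_solution t ab
  (fun k r => is_derive_along_rotation k r Gz : is_derive r 1 (h k) _).
rewrite /h cos0 sin0 !rotPS_id in Ha Hb Hk.
case/orP: pl Ha Hb Hk => /andP[/eqP ea /eqP eb]; subst a b => Ha Hb Hk.
- have [E0 [E1 E2]] := rot01E (cos t) (sin t) (A z).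
  by apply/vec3P; rewrite ?E0 ?E1 ?E2 ?Ha ?Hb //; exact: Hk.
- have [E0 [E1 E2]] := rot12E (cos t) (sin t) (A z).
  by apply/vec3P; rewrite ?E0 ?E1 ?E2 ?Ha ?Hb //; exact: Hk.
Qed.

End Symmetries.

Section PlaneGeometry.
Variable R : realType.

Lemma cos_sin_param (c s : R) : c ^+ 2 + s ^+ 2 = 1 ->
  exists t, cos t = c /\ sin t = s.
Proof.
move=> cs.
have c1 : -1 <= c <= 1.
  have : c ^+ 2 <= 1 by rewrite -cs lerDl sqr_ge0.
  by rewrite -ler_sqrt ?ltr01 // sqrtr_sqr sqrtr1 ler_norml.
have ss : Num.sqrt (1 - c ^+ 2) = `|s| by rewrite -cs addrAC subrr add0r sqrtr_sqr.
have [s0|s0] := leP 0 s.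
- exists (acos c); split; first by rewrite acosK // in_itv.
  by rewrite sin_acos // ss ger0_norm.
- exists (- acos c); split; first by rewrite cosN acosK // in_itv.
  by rewrite sinN sin_acos // ss ltr0_norm // opprK.
Qed.

Lemma rotate_onto_second (u v : R) : exists t,
  cos t * u - sin t * v = 0 /\ sin t * u + cos t * v = Num.sqrt (u ^+ 2 + v ^+ 2).
Proof.
set r := Num.sqrt (u ^+ 2 + v ^+ 2).
have r0 : 0 <= u ^+ 2 + v ^+ 2 by rewrite addr_ge0 // sqr_ge0.
have [rz|rnz] := eqVneq r 0.
  have : u ^+ 2 + v ^+ 2 = 0.
    by apply/eqP; rewrite eq_le r0 andbT -sqrtr_eq0 -/r rz.
  move/eqP; rewrite paddr_eq0 ?sqr_ge0 // !sqrf_eq0 => /andP[/eqP-> /eqP->].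
  by exists 0; rewrite rz !mulr0 subr0 addr0.
have rr : r ^+ 2 = u ^+ 2 + v ^+ 2 by rewrite sqr_sqrtr.
have [t [ct st]] : exists t, cos t = v / r /\ sin t = u / r.
  apply: cos_sin_param; rewrite !expr_div_n -mulrDl addrC -rr mulfV //.
  by rewrite expf_neq0.
exists t; rewrite ct st; split.
  by rewrite mulrAC [u / r * v]mulrAC; ring.
have -> : u / r * u + v / r * v = (u ^+ 2 + v ^+ 2) / r by ring.
by rewrite -rr mulrC -[r ^+ 2]/(r * r) mulKf.
Qed.

Lemma rotate_onto_first (u v : R) : 0 < u ^+ 2 + v ^+ 2 -> exists t,
  cos t * u - sin t * v = Num.sqrt (u ^+ 2 + v ^+ 2) /\ sin t * u + cos t * v = 0.
Proof.
move=> r0; set r := Num.sqrt (u ^+ 2 + v ^+ 2).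
have rnz : r != 0 by rewrite /r sqrtr_eq0 -ltNge.
have rr : r ^+ 2 = u ^+ 2 + v ^+ 2 by rewrite sqr_sqrtr // ltW.
have [t [ct st]] : exists t, cos t = u / r /\ sin t = - v / r.
  apply: cos_sin_param; rewrite !expr_div_n sqrrN -mulrDl -rr mulfV //.
  by rewrite expf_neq0.
exists t; rewrite ct st; split; last by rewrite mulrAC [u / r * v]mulrAC; ring.
have -> : u / r * u - - v / r * v = (u ^+ 2 + v ^+ 2) / r by ring.
by rewrite -rr mulrC -[r ^+ 2]/(r * r) mulKf.
Qed.

Lemma enorm_scale_delta (r : R) i : enorm (r *: delta_mx 0 i : vec R) = `|r|.
Proof.
rewrite /enorm /dot (bigD1 i) //= big1 => [|j /negbTE ji]; last first.
  by rewrite !mxE ji mulr0 mul0r.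
rewrite !mxE; have -> : (true && (i == i))%:R = 1 :> R by rewrite eqxx.
by rewrite mulr1 -expr2 addr0 sqrtr_sqr.
Qed.

Lemma align_momentum (p : vec R) : exists t1 t2,
  rotv o1 o2 (cos t2) (sin t2) (rotv o0 o1 (cos t1) (sin t1) p)
  = enorm p *: delta_mx 0 o2.
Proof.
have [t1 [h11 h12]] := rotate_onto_second (p 0 o0) (p 0 o1).
set rho := Num.sqrt _ in h12.
have [t2 [h21 h22]] := rotate_onto_second rho (p 0 o2).
set r := Num.sqrt _ in h22.
pose q := rotv o1 o2 (cos t2) (sin t2) (rotv o0 o1 (cos t1) (sin t1) p).
have qE : q = r *: delta_mx 0 o2.
  have [E0 [E1 E2]] := rot12E (cos t2) (sin t2) (rotv o0 o1 (cos t1) (sin t1) p).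
  have [F0 [F1 F2]] := rot01E (cos t1) (sin t1) p.
  by apply/vec3P; rewrite /q ?E0 ?E1 ?E2 ?F0 ?F1 ?F2 !mxE /= ?h11 ?h12 ?h21 ?h22
    ?mulr0 ?mulr1.
have : enorm q = enorm p by rewrite !enorm_rot //; exact: cos2Dsin2.
rewrite qE enorm_scale_delta ger0_norm ?sqrtr_ge0 // => rE.
by exists t1, t2; rewrite -rE.
Qed.

Lemma align_spin (u : vec R) : 0 < u 0 o0 ^+ 2 + u 0 o1 ^+ 2 -> exists t,
  rotv o0 o1 (cos t) (sin t) u
  = Num.sqrt (u 0 o0 ^+ 2 + u 0 o1 ^+ 2) *: delta_mx 0 o0 + u 0 o2 *: delta_mx 0 o2.
Proof.
move=> upos; have [t [h1 h2]] := rotate_onto_first upos.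
have [E0 [E1 E2]] := rot01E (cos t) (sin t) u.
by exists t; apply/vec3P; rewrite ?E0 ?E1 ?E2 !mxE ?h1 ?h2 /= ?mulr0 ?mulr1 ?addr0 ?add0r.
Qed.

Lemma rotv01_e2 (c s r : R) :
  rotv o0 o1 c s (r *: delta_mx 0 o2) = r *: delta_mx 0 o2.
Proof.
have [E0 [E1 E2]] := rot01E c s (r *: delta_mx 0 o2).
by apply/vec3P; rewrite ?E0 ?E1 ?E2 !mxE /= ?mulr0 ?subr0 ?addr0.
Qed.

Lemma dot_e0e2 (m v : R) :
  dot (m *: delta_mx 0 o0 + v *: delta_mx 0 o2) (m *: delta_mx 0 o0 + v *: delta_mx 0 o2)
  = m ^+ 2 + v ^+ 2.
Proof. by rewrite dotE !mxE /=; ring. Qed.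

End PlaneGeometry.

Section CanonicalForm.
Variable R : realType.

Definition invts (w : PS R) : R * R := (enorm (pof w), dot (phat w) (sof w)).
Definition decomposed (B C : R * R -> R) (A : PS R -> vec R) (w : PS R) : Prop :=
  A w = B (invts w) *: cross (phat w) (sof w)
        + C (invts w) *: cross (phat w) (cross (phat w) (sof w)).

Lemma invts_rot a b c s (w : PS R) : plane a b -> c ^+ 2 + s ^+ 2 = 1 ->
  invts (rotPS a b c s w) = invts w.
Proof.
move=> pl cs; rewrite /invts phat_rot //; congr (_, _).
  by rewrite /pof /= enorm_rot.
by rewrite /sof /= dot_rot.
Qed.

Lemma decomposed_rot B C A a b c s (w : PS R) : plane a b -> c ^+ 2 + s ^+ 2 = 1 ->
  A (rotPS a b c s w) = rotv a b c s (A w) ->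
  decomposed B C A (rotPS a b c s w) -> decomposed B C A w.
Proof.
move=> pl cs HA; rewrite /decomposed invts_rot // phat_rot // HA.
have -> : sof (rotPS a b c s w) = rotv a b c s (sof w) by [].
rewrite !cross_rot // -(rotvZ _ _ _ _ (C (invts w))) -rotv_lin.
exact: rotv_inj.
Qed.

(* s-component orthogonal to P in a canonical point with P-hat.s = t *)
Definition perp_spin (S t : R) := Num.sqrt (S ^+ 2 - t ^+ 2).
Definition canon_pt (S : R) (q : R * R) : PS R :=
  (0, q.1 *: delta_mx 0 o2, perp_spin S q.2 *: delta_mx 0 o0 + q.2 *: delta_mx 0 o2).
Definition Bcoef (S : R) (A : PS R -> vec R) (q : R * R) :=
  A (canon_pt S q) 0 o1 / perp_spin S q.2.
Definition Ccoef (S : R) (A : PS R -> vec R) (q : R * R) :=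
  - A (canon_pt S q) 0 o0 / perp_spin S q.2.

Lemma perp_spin_gt0 (S t : R) : - S < t < S -> 0 < perp_spin S t.
Proof.
move=> /andP[h1 h2]; rewrite /perp_spin sqrtr_gt0 subr_gt0.
have S0 : 0 < S by have := lt_trans h1 h2; lra.
by rewrite -ltr_sqrt ?exprn_gt0 // !sqrtr_sqr (gtr0_norm S0) ltr_norml h1 h2.
Qed.

Lemma phat_e2 (w : PS R) r : 0 < r -> pof w = r *: delta_mx 0 o2 ->
  phat w = delta_mx 0 o2.
Proof.
move=> r0 pw; rewrite /phat pw enorm_scale_delta gtr0_norm //.
by rewrite scalerA mulVf ?gt_eqF // scale1r.
Qed.

Lemma invts_canon (S : R) (q : R * R) : 0 < q.1 ->
  invts (canon_pt S q) = q /\ phat (canon_pt S q) = delta_mx 0 o2.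
Proof.
move=> r0; have ph := phat_e2 (w := canon_pt S q) r0 erefl.
split => //; rewrite /invts ph /pof /= enorm_scale_delta gtr0_norm //.
rewrite dotE /sof /= !mxE !eqxx ?ord3_neqE /=.
by case: q r0 {ph} => r t /= _; congr (_, _); ring.
Qed.

Lemma Gamma_canon (S : R) (q : R * R) : 0 < S -> - S < q.2 < S -> Gamma S (canon_pt S q).
Proof.
move=> S0 tS; have sg := perp_spin_gt0 tS.
rewrite /Gamma /= /enorm dotE /sof /= !mxE !eqxx ?ord3_neqE ?natr_true ?natr_false /=.
rewrite !mulr0 !mulr1 !addr0 !add0r -!expr2 /perp_spin sqr_sqrtr; last first.
  by move: sg; rewrite /perp_spin sqrtr_gt0 => /ltW.
by rewrite [0 ^+ 2]expr2 mulr0 addr0 subrK sqrtr_sqr gtr0_norm.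
Qed.

Lemma decomposed_canon (S : R) (A : PS R -> vec R) (q : R * R) :
  0 < q.1 -> - S < q.2 < S -> dot (A (canon_pt S q)) (pof (canon_pt S q)) = 0 ->
  decomposed (Bcoef S A) (Ccoef S A) A (canon_pt S q).
Proof.
move=> r0 tS hd; have [iv ph] := invts_canon S r0.
have sn : perp_spin S q.2 != 0 by rewrite gt_eqF // perp_spin_gt0.
rewrite /decomposed iv ph.
have cross_s : cross (delta_mx 0 o2) (sof (canon_pt S q)) = perp_spin S q.2 *: delta_mx 0 o1.
  have [C0 [C1 C2]] := crossE (delta_mx 0 o2) (sof (canon_pt S q)).
  by apply/vec3P; rewrite ?C0 ?C1 ?C2 /sof /= !mxE !eqxx ?ord3_neqE /=; ring.
have cross_cross_s : cross (delta_mx 0 o2) (perp_spin S q.2 *: delta_mx 0 o1)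
          = (- perp_spin S q.2) *: delta_mx 0 o0.
  have [C0 [C1 C2]] := crossE (delta_mx 0 o2) (perp_spin S q.2 *: delta_mx 0 o1).
  by apply/vec3P; rewrite ?C0 ?C1 ?C2 !mxE !eqxx ?ord3_neqE /=; ring.
rewrite cross_s cross_cross_s.
move: hd; rewrite dotE /pof /= !mxE !eqxx ?ord3_neqE /=.
rewrite !mulr0 !add0r mulr1 => /eqP; rewrite mulf_eq0 (gt_eqF r0) orbF => /eqP A2.
apply/vec3P; rewrite !mxE !eqxx ?ord3_neqE /= /Bcoef /Ccoef ?A2.
all: by move: (A (canon_pt S q) 0 o0) (A (canon_pt S q) 0 o1) sn => x y sn'; field.
Qed.

Lemma canonical_rotation (S : R) (z : PS R) : Gamma_good S z ->
  exists t1 t2 t3 (q : R * R), [/\ 0 < q.1, - S < q.2 < S &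
    rotPS o0 o1 (cos t3) (sin t3) (rotPS o1 o2 (cos t2) (sin t2)
      (rotPS o0 o1 (cos t1) (sin t1) (0, pof z, sof z))) = canon_pt S q].
Proof.
move=> [Gz [pn npar]].
have [t1 [t2 pE]] := align_momentum (pof z).
set r := enorm (pof z) in pE.
have r0 : 0 < r by rewrite lt_neqAle eq_sym pn sqrtr_ge0.
pose w2 := rotPS o1 o2 (cos t2) (sin t2) (rotPS o0 o1 (cos t1) (sin t1) (0, pof z, sof z)).
have pw2 : pof w2 = r *: delta_mx 0 o2 := pE.
set u := sof w2.
(* the spin is not along e_2 = P-hat, hence has a nonzero (e_0, e_1) part *)
have upos : 0 < u 0 o0 ^+ 2 + u 0 o1 ^+ 2.
  rewrite lt_neqAle addr_ge0 ?sqr_ge0 // andbT; apply/negP => /eqP/esym/eqP.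
  rewrite paddr_eq0 ?sqr_ge0 // !sqrf_eq0 => /andP[/eqP u0 /eqP u1].
  apply: npar; change (s_parallel_Phat (0, pof z, sof z)).
  apply: (par_rot (isT : plane o0 o1) (cos2Dsin2 t1)).
  apply: (par_rot (isT : plane o1 o2) (cos2Dsin2 t2)).
  exists (u 0 o2); rewrite -/w2 (phat_e2 r0 pw2) -/u.
  by clearbody u; apply/vec3P; rewrite !mxE ?u0 ?u1 /= ?mulr0 ?mulr1.
have [t3 sE] := align_spin upos.
set mu := Num.sqrt _ in sE.
have mu0 : 0 < mu by rewrite sqrtr_gt0.
pose w3 := rotPS o0 o1 (cos t3) (sin t3) w2.
have Gw3 : Gamma S w3.
  by do 3!(apply: Gamma_rot; [done | exact: cos2Dsin2 | ]).
have S_sqr : S ^+ 2 = mu ^+ 2 + u 0 o2 ^+ 2.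
  have : enorm (mu *: delta_mx 0 o0 + u 0 o2 *: delta_mx 0 o2) = S by rewrite -sE.
  rewrite /enorm dot_e0e2 => <-.
  by rewrite sqr_sqrtr // addr_ge0 ?sqr_ge0.
have S0 : 0 <= S by rewrite -Gw3 sqrtr_ge0.
have uS : - S < u 0 o2 < S.
  have m2 : 0 < mu ^+ 2 := exprn_gt0 2 mu0.
  have u2p : 0 <= u 0 o2 ^+ 2 := sqr_ge0 _.
  by rewrite -ltr_norml -(ger0_norm S0) -!sqrtr_sqr ltr_sqrt S_sqr; lra.
exists t1, t2, t3, (r, u 0 o2); split => //.
apply: pairP3.
- by rewrite /rotPS /xof /= !rotv0.
- by rewrite /pof /= -/(pof w2) pw2 rotv01_e2.
- by rewrite /sof /= -/(sof w2) sE /perp_spin S_sqr addrK sqrtr_sqr gtr0_norm.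
Qed.

End CanonicalForm.

Section Transport.
Variable R : realType.

Lemma decomposed_on_good (S : R) (A : PS R -> vec R) (B C : R * R -> R) :
  (forall z, Gamma S z -> differentiable A z) ->
  (forall a k z, Gamma S z -> pb (Pgen a) (fun w => A w 0 k) z = 0) ->
  (forall a b k z, Gamma S z -> pb (Jgen a b) (fun w => A w 0 k) z
                                = kdelta a k * A z 0 b - kdelta b k * A z 0 a) ->
  (forall q : R * R, 0 < q.1 -> - S < q.2 < S -> decomposed B C A (canon_pt S q)) ->
  forall z, Gamma_good S z -> decomposed B C A z.
Proof.
move=> dA HP HJ Hc z gz; have Gz : Gamma S z by case: gz.
have [t1 [t2 [t3 [q [q1 q2 E]]]]] := canonical_rotation gz.
have equi a b w t : plane a b -> Gamma S w ->
    A (rotPS a b (cos t) (sin t) w) = rotv a b (cos t) (sin t) (A w).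
  by move=> pl Gw; exact: (rotation_equivariant dA pl (HJ a b)).
have Grot a b w t : plane a b -> Gamma S w -> Gamma S (rotPS a b (cos t) (sin t) w).
  by move=> pl Gw; apply: Gamma_rot => //; exact: cos2Dsin2.
have G0 : Gamma S (0, pof z, sof z) := Gz.
suff D0 : decomposed B C A (0, pof z, sof z).
  by rewrite /decomposed (translation_invariant dA HP Gz).
apply: (decomposed_rot (isT : plane o0 o1) (cos2Dsin2 t1) (equi o0 o1 _ t1 isT G0)).
have G1 := Grot o0 o1 _ t1 isT G0.
apply: (decomposed_rot (isT : plane o1 o2) (cos2Dsin2 t2) (equi o1 o2 _ t2 isT G1)).
have G2 := Grot o1 o2 _ t2 isT G1.
apply: (decomposed_rot (isT : plane o0 o1) (cos2Dsin2 t3) (equi o0 o1 _ t3 isT G2)).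
by rewrite E; exact: Hc.
Qed.

End Transport.

Section C1Functions.
Variable R : realType.
Variable V : normedModType R.

Lemma continuous_locally_eq (D : set V) (f g : V -> R) (q : V) :
  open D -> D q -> (forall w, D w -> f w = g w) ->
  {for q, continuous g} -> {for q, continuous f}.
Proof.
move=> oD Dq fg cg.
have nD : \forall w \near q, D w by apply: open_nbhs_nbhs.
have gq : g @ q --> f q by rewrite fg.
apply: cvg_trans gq; apply: near_eq_cvg; near=> w.
by rewrite /= fg //; near: w.
Unshelve. all: by end_near.
Qed.

Lemma C1_on_opp (D : set V) (f : V -> R) : C1_on D f -> C1_on D (fun q => - f q).
Proof.
move=> [oD [df cf]]; split => //; split.
  by move=> z Dz; apply: differentiableN; exact: df.
move=> v q Dq; apply: (continuous_locally_eq (g := fun w => - 'D_v f w) oD Dq).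
  move=> w Dw; rewrite (_ : (fun q => - f q) = - f) //.
  by rewrite deriveN //; apply: diff_derivable; exact: df.
exact: continuousN (cf v q Dq).
Qed.

Lemma C1_on_mul (D : set V) (f g : V -> R) :
  C1_on D f -> C1_on D g -> C1_on D (fun q => f q * g q).
Proof.
move=> [oD [df cf]] [_ [dg cg]]; split => //; split.
  by move=> z Dz; apply: differentiableM; [exact: df | exact: dg].
move=> v q Dq.
apply: (continuous_locally_eq
  (g := fun w => f w * 'D_v g w + g w * 'D_v f w) oD Dq).
  move=> w Dw; rewrite (_ : (fun q => f q * g q) = f * g) //.
  by rewrite deriveM //; apply: diff_derivable; [exact: df | exact: dg].
apply: continuousD; apply: continuousM.
- exact: differentiable_continuous (df q Dq).
- exact: cg.
- exact: differentiable_continuous (dg q Dq).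
- exact: cf.
Qed.

End C1Functions.

Section Regularity.
Variable R : realType.
Variable S : R.

Definition invt_dom : set (R * R) := [set q | 0 < q.1 /\ - S < q.2 < S].

Lemma open_invt_dom : open invt_dom.
Proof.
have -> : invt_dom = (fst @^-1` [set x | 0 < x]) `&`
    ((snd @^-1` [set x | - S < x]) `&` (snd @^-1` [set x | x < S])).
  by apply/seteqP; split => q /=; rewrite /invt_dom /=;
    [move=> [-> /andP[-> ->]] | move=> [-> [-> ->]]].
apply: openI; [|apply: openI].
- by apply: open_comp; [move=> x _; exact: cvg_fst | exact: open_gt].
- by apply: open_comp; [move=> x _; exact: cvg_snd | exact: open_gt].
- by apply: open_comp; [move=> x _; exact: cvg_snd | exact: open_lt].
Qed.

Lemma is_derive_perp_spin (t : R) : - S < t < S ->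
  is_derive t (1:R) (perp_spin S) (- t / perp_spin S t).
Proof.
move=> tS; have sg := perp_spin_gt0 tS.
have pos : 0 < S ^+ 2 - t ^+ 2 by rewrite -sqrtr_gt0.
have D1 : is_derive t (1:R) (fun t => S ^+ 2 - t ^+ 2) (- (2 * t)).
  apply: (is_derive_eq (is_deriveB (is_derive_cst (S ^+ 2) t 1)
             (is_deriveX 2 (is_derive_id t 1)))).
  by rewrite expr1 /= scale_regE mulr1 sub0r.
have -> : - t / perp_spin S t = (2 * perp_spin S t)^-1 * - (2 * t).
  by move: sg; move: (perp_spin S t) => s s0; field; rewrite gt_eqF.
exact: (@is_derive1_comp _ Num.sqrt (fun t => S ^+ 2 - t ^+ 2) t _ _
  (is_derive1_sqrt pos) D1).
Qed.

Lemma differentiable_perp_spin (q : R * R) : - S < q.2 < S ->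
  differentiable (fun q : R * R => perp_spin S q.2) q.
Proof.
move=> tS; apply: (differentiable_comp (differentiable_snd q)).
by apply/derivable1_diffP; exact: is_derive_derivable (is_derive_perp_spin tS).
Qed.

Lemma canon_ptE : canon_pt S =
  fun q => q.1 *: ep o2 + perp_spin S q.2 *: es o0 + q.2 *: es o2.
Proof. by apply/funext => q; apply: pairP3; apply/rowP => j; rewrite !mxE; ring. Qed.

Lemma differentiable_canon_pt (q : R * R) : - S < q.2 < S ->
  differentiable (canon_pt S) q.
Proof.
move=> tS; rewrite canon_ptE.
apply: differentiableD; first apply: differentiableD.
- by apply: differentiableZl; exact: differentiable_fst.
- by apply: differentiableZl; exact: differentiable_perp_spin.
- by apply: differentiableZl; exact: differentiable_snd.
Qed.

Lemma derive_perp_spin (q v : R * R) : - S < q.2 < S ->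
  'D_v (fun q : R * R => perp_spin S q.2) q = v.2 * (- q.2 / perp_spin S q.2).
Proof.
move=> tS; have dsig : differentiable (perp_spin S) q.2.
  by apply/derivable1_diffP; exact: is_derive_derivable (is_derive_perp_spin tS).
rewrite (_ : (fun q : R * R => perp_spin S q.2) = perp_spin S \o snd) //.
rewrite derive_comp; [|exact: differentiable_snd|exact: dsig].
by rewrite derive_snd derive1_scale // (derive_valE (is_derive_perp_spin tS)).
Qed.

Lemma derive_canon_pt (q v : R * R) : - S < q.2 < S ->
  'D_v (canon_pt S) q =
  v.1 *: ep o2 + (v.2 * (- q.2 / perp_spin S q.2)) *: es o0 + v.2 *: es o2.
Proof.
move=> tS; rewrite canon_ptE.
have d1 : differentiable (fun q : R * R => q.1 *: (ep o2 : PS R)) q.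
  by apply: differentiableZl; exact: differentiable_fst.
have d2 : differentiable (fun q : R * R => perp_spin S q.2 *: (es o0 : PS R)) q.
  by apply: differentiableZl; exact: differentiable_perp_spin.
have d3 : differentiable (fun q : R * R => q.2 *: (es o2 : PS R)) q.
  by apply: differentiableZl; exact: differentiable_snd.
rewrite deriveD; last 2 first.
- by apply: diff_derivable; apply: differentiableD.
- exact: diff_derivable.
rewrite deriveD; [|exact: diff_derivable|exact: diff_derivable].
rewrite !deriveZl_const; [|exact: differentiable_snd|exact: differentiable_perp_spin
  |exact: differentiable_fst].
by rewrite derive_fst derive_snd derive_perp_spin.
Qed.

Lemma C1_inv_perp_spin : C1_on invt_dom (fun q => (perp_spin S q.2)^-1).
Proof.
have sn (q : R * R) : - S < q.2 < S -> perp_spin S q.2 != 0.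
  by move=> tS; rewrite gt_eqF // perp_spin_gt0.
have dinv q : - S < q.2 < S ->
    differentiable (fun q : R * R => (perp_spin S q.2)^-1) q.
  by move=> tS; apply: differentiableV; [exact: differentiable_perp_spin | exact: sn].
split; first exact: open_invt_dom; split; first by move=> q [_ tS]; exact: dinv.
move=> v q [q1 tS].
apply: (continuous_locally_eq (g := fun w : R * R =>
  - (perp_spin S w.2) ^- 2 * (v.2 * (- w.2 / perp_spin S w.2)))
  open_invt_dom (conj q1 tS)).
  move=> w [_ tw]; rewrite deriveV ?sn ?derive_perp_spin //.
  exact/diff_derivable/differentiable_perp_spin.
(* the derivative is itself differentiable, hence continuous *)
have dsig := differentiable_perp_spin tS.
apply: differentiable_continuous; apply: differentiableM.
  apply: differentiableN; apply: differentiableV; last by rewrite expf_neq0 // sn.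
  exact: (differentiableX 1 dsig).
apply: differentiableM; first exact: differentiable_cst.
apply: differentiableM; first exact: differentiableN (differentiable_snd q).
exact: dinv.
Qed.

End Regularity.

Section CoefficientRegularity.
Variables (R : realType) (S : R) (A : PS R -> vec R) (U : set (PS R)).
Hypotheses (S_gt0 : 0 < S) (GU : Gamma S `<=` U) (A_C1 : C1_on U A).

Lemma C1_canon_coord k : C1_on (invt_dom S) (fun q => A (canon_pt S q) 0 k).
Proof.
have [_ [dA cA]] := A_C1.
have dAc q : invt_dom S q -> differentiable A (canon_pt S q).
  by move=> [_ tS]; apply/dA/GU/Gamma_canon.
split; first exact: open_invt_dom; split.
  move=> q Dq; exact: (differentiable_comp (differentiable_canon_pt Dq.2)
                         (differentiable_coord_comp k (dAc q Dq))).
move=> v q Dq; have [_ tS] := Dq.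
pose dAk e w := ('D_e A (canon_pt S w)) 0 k.
refine (@continuous_locally_eq _ _ (invt_dom S) _ (fun w : R * R =>
    v.1 * dAk (ep o2) w + v.2 * (- w.2 / perp_spin S w.2) * dAk (es o0) w
    + v.2 * dAk (es o2) w) q (@open_invt_dom _ S) Dq _ _).
  move=> w Dw; have [_ tw] := Dw; have dw := dAc w Dw.
  rewrite (_ : (fun q => A (canon_pt S q) 0 k) = (fun y => A y 0 k) \o canon_pt S) //.
  rewrite derive_comp; [|exact: differentiable_canon_pt|exact: differentiable_coord_comp].
  rewrite derive_canon_pt // !deriveDdir ?deriveZdir; try exact: differentiable_coord_comp.
  by rewrite !derive_coord.
have c_canon : {for q, continuous (canon_pt S)}.
  exact: differentiable_continuous (differentiable_canon_pt tS).
have cdA e : {for q, continuous (dAk e)}.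
  have cDA := continuous_comp (cA e _ (GU (Gamma_canon S_gt0 tS)))
    (@coord_continuous R 1 3 0 k ('D_e A (canon_pt S q))).
  exact: continuous_comp c_canon cDA.
have c_slope : {for q, continuous (fun w : R * R => - w.2 / perp_spin S w.2)}.
  apply: differentiable_continuous; apply: differentiableM.
    exact: differentiableN (differentiable_snd q).
  apply: differentiableV; first exact: differentiable_perp_spin.
  by rewrite gt_eqF // perp_spin_gt0.
apply: continuousD; first apply: continuousD.
- by apply: continuousM; [exact: cvg_cst | exact: cdA].
- by apply: continuousM; [apply: continuousM; [exact: cvg_cst | exact: c_slope]
    | exact: cdA].
- by apply: continuousM; [exact: cvg_cst | exact: cdA].
Qed.

Lemma C1_Bcoef : C1_on (invt_dom S) (Bcoef S A).
Proof. exact: (C1_on_mul (C1_canon_coord o1) (C1_inv_perp_spin S)). Qed.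

Lemma C1_Ccoef : C1_on (invt_dom S) (Ccoef S A).
Proof.
rewrite (_ : Ccoef S A = fun q => - (A (canon_pt S q) 0 o0 / perp_spin S q.2)).
  exact: C1_on_opp (C1_on_mul (C1_canon_coord o0) (C1_inv_perp_spin S)).
by apply/funext => q; rewrite /Ccoef mulNr.
Qed.

End CoefficientRegularity.

Unset Implicit Arguments.

Theorem mainTheorem11 (R : realType) (c m S : R) (hc : 0 < c) (hm : 0 < m)
  (hS : 0 < S) (A : PS R -> 'rV[R]_3) :
  (exists U : set (PS R), Gamma S `<=` U /\ C1_on U A) ->
  (forall (a b : 'I_3) z, Gamma S z ->
      pb (Pgen a) (fun w => A w 0 b) z = 0) ->
  (forall (a b c' : 'I_3) z, Gamma S z ->
      pb (Jgen a b) (fun w => A w 0 c') z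
      = kdelta a c' * A z 0 b - kdelta b c' * A z 0 a) ->
  (forall z, Gamma S z -> dot (A z) (pof z) = 0) ->
  exists B C : R * R -> R,
    C1_on [set q : R * R | 0 < q.1 /\ - S < q.2 < S] B /\
    C1_on [set q : R * R | 0 < q.1 /\ - S < q.2 < S] C /\
    forall z, Gamma_good S z ->
      A z = B (enorm (pof z), dot (phat z) (sof z)) *: cross (phat z) (sof z)
          + C (enorm (pof z), dot (phat z) (sof z))
              *: cross (phat z) (cross (phat z) (sof z)).
Proof.
move=> [U [GU A_C1]] HP HJ HAP.
have dA z : Gamma S z -> differentiable A z by move=> /GU; exact: A_C1.2.1.
exists (Bcoef S A), (Ccoef S A); split; [exact: C1_Bcoef hS GU A_C1|split].
  exact: C1_Ccoef hS GU A_C1.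
apply: (decomposed_on_good dA HP HJ) => q q1 tS.
by apply: decomposed_canon => //; apply/HAP/Gamma_canon.
Qed.
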